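(* For $0<x<1$, as power series in $t$ (convergent for $t$ near $0$), \[ \sum_{n=0}^\infty p_{n-1}(x)\frac{t^n}{n!} = \frac{e^{(1-x)t}\left(\arcsin\!\big(x^{1/2}e^{(1-x)t}\big) - \arcsin\!\big(x^{1/2}\big)\right)}{x^{1/2}\left(1-xe^{2(1-x)t}\right)^{1/2}}. \]
   Context: Define polynomial sequences $(p_k(x))_{k\ge -1}$ and $(q_k(x))_{k\ge -1}$ by $p_{-1}(x)=0$, $q_{-1}(x)=1$ and, for $k\ge -1$, $p_{k+1}(x) = 2(kx+1)p_k(x) + 2x(1-x)p_k'(x) + q_k(x)$, $q_{k+1}(x) = (2(k+1)x+1)q_k(x) + 2x(1-x)q_k'(x)$. *)

From Stdlib Require Import Reals.
From Coquelicot Require Import Coquelicot.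
From mathcomp Require Import all_boot all_order all_algebra.
From mathcomp Require Import Rstruct.
Import GRing.Theory.

Local Open Scope ring_scope.

(* pq n = (p_{n-1}, q_{n-1}) for n : nat, i.e. index shifted by one so that
   pq 0 = (p_{-1}, q_{-1}) = (0, 1). With k = n - 1 the recurrences read
   p_{k+1} = 2(kx+1) p_k + 2x(1-x) p_k' + q_k,
   q_{k+1} = (2(k+1)x+1) q_k + 2x(1-x) q_k'. *)
Fixpoint pq (n : nat) : {poly R} * {poly R} :=
  match n with
  | O => (0, 1)
  | S m =>
      let p := (pq m).1 in
      let q := (pq m).2 in
      let k : R := (m%:R - 1) in
      ((2%:R * (k *: 'X + 1)) * p + (2%:R *: ('X * (1 - 'X))) * p^`() + q,
       ((2%:R * (m%:R)) *: 'X + 1) * q + (2%:R *: ('X * (1 - 'X))) * q^`())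
  end.

Definition pshift (n : nat) : {poly R} := (pq n).1.
Definition qshift (n : nat) : {poly R} := (pq n).2.

Definition p_eval (n : nat) (x : R) : R := (pshift n).[x].

From Stdlib Require Import Reals Factorial Lra.
From Coquelicot Require Import Coquelicot.
From mathcomp Require Import all_boot all_order all_algebra Rstruct.
From mathcomp Require ring lra.
Import Order.TTheory GRing.Theory Num.Theory.

(* Both sides solve the same linear differential equation in t.  Put
   E(t) = e^{2(1-x)t}.  Differentiating the closed form f gives
   (1 - x E) f' = (1 - x)(f + E).  For the series G(t) = sum_n p_{n-1}(x) t^n/n!
   the same equation G' = x E G' + (1 - x)(G + E) is, coefficientwise, the
   polynomial identity
     P_{n+1} = X sum_k C(n,k) (2(1-X))^k P_{n-k+1} + (1 - X)(P_n + (2(1-X))^n),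
   where P_n = p_{n-1}.  Its residual (and that of the analogous identity for the
   q's) is an eigensequence, vanishing at n = 0, of a derivation L on
   exponential generating functions for which the recurrences defining p and q
   read L p = 2(1-X) p + q and L q = q; hence it vanishes identically.
   The identity also bounds the coefficients of G by 4^n, so G converges for
   |t| < 1/4; since f(0) = G(0) = 0, uniqueness for the linear equation
   satisfied by f - G gives f = G wherever x E(t) < 1. *)

Section BinomialDerivation.
Import ring.
Local Open Scope ring_scope.

Context {F : comNzRingType} {u v : {poly F}}.

(* For A = sum_n a_n t^n/n!, [binconv a b] is the coefficient sequence of A B
   and [Lder u v a] that of (1 - u t) d/dt A - v d/dX A, a derivation; hence
   [Lder_binconv]. *)
Definition binconv (a b : nat -> {poly F}) (n : nat) : {poly F} :=
  \sum_(k < n.+1) 'C(n, k)%:R * (a k * b (n - k)%N).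

Definition Lder (a : nat -> {poly F}) (n : nat) : {poly F} :=
  a n.+1 - n%:R * u * a n - v * (a n)^`().

Lemma eq_binconv a a' b b' n : a =1 a' -> b =1 b' -> binconv a b n = binconv a' b' n.
Proof. by move=> ha hb; apply: eq_bigr => k _; rewrite ha hb. Qed.

Lemma binconvMl c a b n : binconv (fun k => c * a k) b n = c * binconv a b n.
Proof. by rewrite /binconv mulr_sumr; apply: eq_bigr => k _; ring. Qed.

Lemma binconvMr c a b n : binconv a (fun k => c * b k) n = c * binconv a b n.
Proof. by rewrite /binconv mulr_sumr; apply: eq_bigr => k _; ring. Qed.

Lemma binconvDr a b b' n :
  binconv a (fun k => b k + b' k) n = binconv a b n + binconv a b' n.
Proof. by rewrite /binconv -big_split /=; apply: eq_bigr => k _; ring. Qed.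

Lemma binconvS a b n :
  binconv a b n.+1 = binconv (fun k => a k.+1) b n + binconv a (fun k => b k.+1) n.
Proof.
rewrite /binconv big_ord_recl /=.
under eq_bigr => i _ do rewrite /bump /= add1n binS natrD mulrDl.
rewrite big_split /= (addrC (\sum_(i < n.+1) 'C(n, i.+1)%:R * _)) addrCA.
congr (_ + _).
rewrite bin0 subn0 [in LHS]big_ord_recr /= (bin_small (ltnSn n)) mul0r addr0.
rewrite [RHS]big_ord_recl /= bin0 subn0.
congr (_ + _); apply: eq_bigr => i _; rewrite /bump /= add1n subSS.
by rewrite -subSn // -ltnS.
Qed.

Lemma LderD a b n : Lder (fun k => a k + b k) n = Lder a n + Lder b n.
Proof. rewrite /Lder derivD; ring. Qed.

Lemma LderB a b n : Lder (fun k => a k - b k) n = Lder a n - Lder b n.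
Proof. rewrite /Lder derivB; ring. Qed.

Lemma LderMl c a n : Lder (fun k => c * a k) n = c * Lder a n - v * c^`() * a n.
Proof. rewrite /Lder derivM; ring. Qed.

Lemma Lder_shift a n : Lder (fun k => a k.+1) n = Lder a n.+1 + u * a n.+1.
Proof. rewrite /Lder -natr1; ring. Qed.

Lemma Lder_binconv a b n :
  Lder (binconv a b) n = binconv (Lder a) b n + binconv a (Lder b) n.
Proof.
rewrite {1}/Lder binconvS /binconv -big_split /= raddf_sum /= !mulr_sumr.
rewrite -!sumrB -big_split /=; apply: eq_bigr => k _.
have hk : (k <= n)%N by rewrite -ltnS.
rewrite /Lder !derivE -subSn // natrB //; ring.
Qed.

Lemma Lder_eigen_eq0 (c : {poly F}) a :
  (forall n, Lder a n = c * a n) -> a 0%N = 0 -> forall n, a n = 0.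
Proof.
move=> Ha a0; elim=> // n IH.
by have := Ha n; rewrite /Lder IH derivE !mulr0 !subr0.
Qed.

End BinomialDerivation.

Arguments Lder {F} u v a n.

Section PolynomialRecurrences.
Import ring.
Local Open Scope ring_scope.

Local Notation L := (Lder (2%:R * 'X) (2%:R * 'X * (1 - 'X))).

Definition epoly (n : nat) : {poly R} := (2%:R * (1 - 'X)) ^+ n.

Lemma L_pshift n : L pshift n = 2%:R * (1 - 'X) * pshift n + qshift n.
Proof.
rewrite /Lder /pshift /qshift /= -!mul_polyC rmorphB /= rmorph1 !rmorph_nat.
ring.
Qed.

Lemma L_qshift n : L qshift n = qshift n.
Proof.
rewrite /Lder /pshift /qshift /= -!mul_polyC !rmorphM /= !rmorph_nat -natr1.
ring.
Qed.

Lemma L_epoly n : L epoly n = 2%:R * (1 - 'X) * epoly n.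
Proof.
rewrite /Lder /epoly exprS deriv_exp !derivE.
case: n => [|n]; first by rewrite expr0 mulr0n mulr0 !mul0r !subr0 mulr1.
rewrite exprS -natr1 mulrnAr -mulr_natl; ring.
Qed.

Lemma binconv_L_epoly b n :
  binconv (L epoly) b n = 2%:R * (1 - 'X) * binconv epoly b n.
Proof. by rewrite -binconvMl; apply: eq_binconv => // k; exact: L_epoly. Qed.

Lemma qshift_conv n :
  qshift n.+1 = 'X * binconv epoly (fun k => qshift k.+1) n + (1 - 'X) * qshift n.
Proof.
pose Y n := qshift n.+1 - 'X * binconv epoly (fun k => qshift k.+1) n
            - (1 - 'X) * qshift n.
have LY m : L Y m = (1 + 2%:R * 'X) * Y m.
  rewrite /Y !LderB (LderMl 'X (binconv _ _)) LderMl !derivE.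
  rewrite (Lder_shift qshift) Lder_binconv !L_qshift.
  rewrite binconv_L_epoly.
  have -> : binconv epoly (L (fun k => qshift k.+1)) m =
            (1 + 2%:R * 'X) * binconv epoly (fun k => qshift k.+1) m.
    rewrite -binconvMr; apply: eq_binconv => // k.
    by rewrite Lder_shift L_qshift; ring.
  ring.
suff /eqP : Y n = 0 by rewrite /Y subr_eq0 subr_eq addrC => /eqP.
apply: (Lder_eigen_eq0 _ _ LY).
rewrite /Y /binconv big_ord1 /epoly /qshift /= -!mul_polyC !rmorphM /= !rmorph_nat !derivE.
rewrite expr0 bin0; ring.
Qed.

Lemma pshift_conv n :
  pshift n.+1 = 'X * binconv epoly (fun k => pshift k.+1) n
                + (1 - 'X) * (pshift n + epoly n).
Proof.
pose Y n := pshift n.+1 - 'X * binconv epoly (fun k => pshift k.+1) n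
            - (1 - 'X) * (pshift n + epoly n).
have LY m : L Y m = 2%:R * Y m.
  rewrite /Y !LderB (LderMl 'X (binconv _ _)) LderMl (LderD pshift) !derivE.
  rewrite (Lder_shift pshift) Lder_binconv binconv_L_epoly !L_pshift L_epoly.
  have -> : binconv epoly (L (fun k => pshift k.+1)) m =
            2%:R * binconv epoly (fun k => pshift k.+1) m
            + binconv epoly (fun k => qshift k.+1) m.
    rewrite -binconvMr -binconvDr; apply: eq_binconv => // k.
    by rewrite Lder_shift L_pshift; ring.
  rewrite (qshift_conv m); ring.
suff /eqP : Y n = 0 by rewrite /Y subr_eq0 subr_eq addrC => /eqP.
apply: (Lder_eigen_eq0 _ _ LY).
rewrite /Y /binconv big_ord1 /epoly /pshift /qshift /= -!mul_polyC.
rewrite !derivE expr0 bin0 polyCB polyC1 !rmorph_nat; ring.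
Qed.

End PolynomialRecurrences.

Section CoefficientGrowth.
Import ring lra.
Local Open Scope ring_scope.

Context {K : realFieldType}.

Lemma sum_geometric_le (q : K) n : 0 <= q <= 2^-1 -> \sum_(k < n) q ^+ k.+1 <= 2 * q.
Proof.
move=> /andP[q0 q1]; elim: n => [|n IH]; first by rewrite big_ord0; lra.
rewrite big_ord_recl expr1.
under eq_bigr => i _ do rewrite exprS.
rewrite -mulr_sumr.
have : q * \sum_(i < n) q ^+ i.+1 <= q * (2 * q) by rewrite ler_wpM2l.
nra.
Qed.

Lemma convolution_tail_bound (x : K) (a e : nat -> K) n :
  0 < x < 1 -> (forall k, 0 <= e k <= (2 * (1 - x)) ^+ k) ->
  (forall m, (m <= n)%N -> 0 <= a m <= 4 ^+ m) ->
  0 <= \sum_(k < n) e k.+1 * ((n - k)%:R * a (n - k)%N) <= 4 * (1 - x) * n%:R * 4 ^+ n.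
Proof.
move=> /andP[x0 x1] he ha.
pose q := (1 - x) / 2; pose B : K := n%:R * 4 ^+ n.+1.
have B0 : 0 <= B by rewrite mulr_ge0 ?ler0n ?exprn_ge0.
have term_le (k : 'I_n) :
    0 <= e k.+1 * ((n - k)%:R * a (n - k)%N) <= B * q ^+ k.+1.
  have [ek0 ekle] := andP (he k.+1).
  have [ak0 akle] := andP (ha (n - k)%N (leq_subr _ _)).
  have nk_le : (n - k)%:R <= n%:R :> K by rewrite ler_nat leq_subr.
  have -> : B * q ^+ k.+1 = (2 * (1 - x)) ^+ k.+1 * (n%:R * 4 ^+ (n - k)).
    rewrite /B /q.
    have -> : 4 ^+ n.+1 = 4 ^+ (n - k) * (2 * 2) ^+ k.+1 :> K.
      by rewrite -natrM -exprD addnS subnK // ltnW.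
    rewrite !exprMn exprVn; field.
    by rewrite expf_neq0 // pnatr_eq0.
  apply/andP; split; first by rewrite !mulr_ge0 // ler0n.
  by rewrite ler_pM // ?mulr_ge0 ?ler0n // ler_pM // ler0n.
apply/andP; split; first by apply: sumr_ge0 => k _; case/andP: (term_le k).
apply: le_trans (_ : \sum_(k < n) B * q ^+ k.+1 <= _).
  by apply: ler_sum => k _; case/andP: (term_le k).
have geo : \sum_(k < n) q ^+ k.+1 <= 2 * q by apply: sum_geometric_le; rewrite /q; lra.
rewrite -mulr_sumr; apply: le_trans (ler_wpM2l B0 geo) _.
by rewrite /B /q exprS; lra.
Qed.

(* The recurrence is the coefficient form of
   (1 - x) A' = x (E - 1) A' + (1 - x)(A + E), where E = sum_k e_k t^k/k!. *)
Lemma egf_coef_bound (x : K) (a e : nat -> K) :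
  0 < x < 1 -> a 0%N = 0 ->
  (forall k, 0 <= e k <= (2 * (1 - x)) ^+ k) ->
  (forall n, (1 - x) * (n.+1%:R * a n.+1) =
     x * \sum_(k < n) e k.+1 * ((n - k)%:R * a (n - k)%N) + (1 - x) * (a n + e n)) ->
  forall n, 0 <= a n <= 4 ^+ n.
Proof.
move=> x01 a0 he rec; elim/ltn_ind => -[_|n IH].
  by rewrite a0 expr0 lexx ler01.
have [x0 x1] := andP x01.
have [S0 S_le] := andP (convolution_tail_bound _ _ _ n x01 he IH).
have [an0 anle] := andP (IH n (ltnSn n)).
have [en0 enle] := andP (he n).
have en4 : (2 * (1 - x)) ^+ n <= 4 ^+ n by rewrite lerXn2r ?nnegrE; lra.
have := rec n; rewrite -natr1.
set S := \sum_(k < n) _ in S0 S_le *; set N : K := n%:R in S_le *.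
set P : K := 4 ^+ n in S_le anle en4 * => rec_n.
have N0 : 0 <= N by rewrite ler0n.
have P0 : 0 < P by rewrite exprn_gt0.
have xS_le : x * S <= (1 - x) * (4 * N * P).
  have : x * S <= x * (4 * (1 - x) * N * P) by rewrite ler_wpM2l //; lra.
  have : 0 <= (1 - x) * (N * P) by rewrite !mulr_ge0 //; lra.
  nra.
have c0 : 0 < (1 - x) * (N + 1) by rewrite mulr_gt0 //; lra.
have Ae_le : (1 - x) * (a n + e n) <= (1 - x) * (2 * P) by apply: ler_wpM2l; lra.
rewrite exprS -/P; apply/andP; split.
  by rewrite -(pmulr_rge0 _ c0) -mulrA rec_n addr_ge0 // mulr_ge0 //; lra.
rewrite -(ler_pM2l c0) -mulrA rec_n; nra.
Qed.

End CoefficientGrowth.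

Section Coefficients.
Import ring lra.
Local Open Scope ring_scope.

(* No result type on purpose: [: R] would make [/] elaborate through an
   instance that [field] does not recognise after unfolding. *)
Definition p_coef (x : R) (n : nat) := p_eval n x / n`!%:R.
Definition exp_coef (x : R) (n : nat) := (2 * (1 - x)) ^+ n / n`!%:R.

Lemma INR_fact n : INR (fact n) = n`!%:R.
Proof. by rewrite INRE; congr (_%:R); elim: n => // n IH; rewrite factS -IH. Qed.

Lemma fact_neq0 n : n`!%:R != 0 :> R.
Proof. by rewrite pnatr_eq0 -lt0n fact_gt0. Qed.

Lemma p_eval_conv (x : R) n :
  p_eval n.+1 x = x * \sum_(k < n.+1) 'C(n, k)%:R * ((2 * (1 - x)) ^+ k * p_eval (n - k).+1 x)
                  + (1 - x) * (p_eval n x + (2 * (1 - x)) ^+ n).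
Proof.
rewrite /p_eval pshift_conv /binconv /epoly; move: pshift => p.
rewrite hornerD !hornerM hornerX horner_sum.
congr (_ * _ + _); last by rewrite !hornerE; ring.
by apply: eq_bigr => k _; rewrite -polyC_natr !hornerE; ring.
Qed.
Lemma p_coef_rec x n :
  n.+1%:R * p_coef x n.+1 =
  x * \sum_(k < n.+1) exp_coef x k * ((n - k).+1%:R * p_coef x (n - k).+1)
  + (1 - x) * (p_coef x n + exp_coef x n).
Proof.
have fact_split (k : 'I_n.+1) :
    exp_coef x k * ((n - k).+1%:R * p_coef x (n - k).+1) =
    'C(n, k)%:R * ((2 * (1 - x)) ^+ k * p_eval (n - k).+1 x) / n`!%:R.
  have kn : (k <= n)%N by rewrite -ltnS.
  have binE : 'C(n, k)%:R * (k`!%:R * (n - k)`!%:R) = n`!%:R :> R.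
    by rewrite -!natrM bin_fact.
  rewrite /exp_coef /p_coef factS natrM -binE.
  field.
  by rewrite !fact_neq0 pnatr_eq0 -lt0n bin_gt0 kn nat1r pnatr_eq0.
under eq_bigr => k _ do rewrite fact_split.
rewrite -mulr_suml /p_coef p_eval_conv factS natrM /exp_coef.
field.
by rewrite fact_neq0 nat1r pnatr_eq0.
Qed.

Lemma p_coef0 x : p_coef x 0 = 0.
Proof. by rewrite /p_coef /p_eval horner0 mul0r. Qed.

Lemma exp_coef0 x : exp_coef x 0 = 1.
Proof. by rewrite /exp_coef expr0 divr1. Qed.

Lemma exp_coef_bound x k : 0 < x < 1 -> 0 <= exp_coef x k <= (2 * (1 - x)) ^+ k.
Proof.
move=> /andP[_ x1]; have c0 : 0 <= (2 * (1 - x)) ^+ k by rewrite exprn_ge0 //; lra.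
rewrite /exp_coef divr_ge0 ?ler0n //= ler_pdivrMr ?ltr0n ?fact_gt0 //.
by rewrite ler_peMr // ler1n fact_gt0.
Qed.

Lemma exp_coef_le_pow4 x k : 0 < x < 1 -> 0 <= exp_coef x k <= 4 ^+ k.
Proof.
move=> x01; have /andP[e0 e1] := exp_coef_bound x k x01; case/andP: x01 => x0 x1.
by rewrite e0 (le_trans e1) // lerXn2r ?nnegrE //; lra.
Qed.

Lemma p_coef_bound x n : 0 < x < 1 -> 0 <= p_coef x n <= 4 ^+ n.
Proof.
move=> x01; apply: (egf_coef_bound _ _ _ x01 (p_coef0 x)) => [k|{}n].
  exact: exp_coef_bound.
have := p_coef_rec x n; rewrite big_ord_recl exp_coef0 subn0 mul1r.
under eq_bigr => k _ do rewrite subnSK //.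
lra.
Qed.

End Coefficients.

Local Open Scope R_scope.

Lemma p_coefE x n : p_coef x n = p_eval n x / INR (fact n).
Proof. by rewrite /p_coef RdivE INR_fact. Qed.

Lemma exp_coefE x n : exp_coef x n = (2 * (1 - x)) ^ n / INR (fact n).
Proof. by rewrite /exp_coef RdivE INR_fact RpowE RmultE RminusE. Qed.

Lemma Rabs_le_pow4 (y : R) n : (0 <= y <= 4 ^+ n)%R -> Rabs y <= 4 ^ n.
Proof.
move=> /andP[y0 yle]; apply/RleP.
by rewrite RabsE RpowE IZRposE INRE ger0_norm.
Qed.

Lemma CV_radius_ge_inv (a : nat -> R) (M : R) :
  0 < M -> (forall n, Rabs (a n) <= M ^ n) -> Rbar_le (/ M) (CV_radius a).
Proof.
move=> M0 aM; apply: (proj1 (CV_radius_bounded a)); exists 1 => n.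
rewrite Rabs_mult -RPow_abs Rabs_inv (Rabs_pos_eq M) ?pow_inv; last lra.
rewrite -Rdiv_def -Rdiv_le_1; [exact: aM | exact: pow_lt].
Qed.

Lemma CV_radius_p_coef x : 0 < x < 1 -> Rbar_le (/ 4) (CV_radius (p_coef x)).
Proof.
move=> [x0 x1]; apply: CV_radius_ge_inv => [|n]; first lra.
by apply/Rabs_le_pow4/p_coef_bound/andP; split; apply/RltP.
Qed.

Lemma CV_radius_exp_coef x : 0 < x < 1 -> Rbar_le (/ 4) (CV_radius (exp_coef x)).
Proof.
move=> [x0 x1]; apply: CV_radius_ge_inv => [|n]; first lra.
by apply/Rabs_le_pow4/exp_coef_le_pow4/andP; split; apply/RltP.
Qed.

Lemma is_pseries_exp_coef x t : is_pseries (exp_coef x) t (exp (2 * (1 - x) * t)).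
Proof.
apply: is_series_ext (is_exp_Reals (2 * (1 - x) * t)) => n.
rewrite !pow_n_pow /scal /= /mult /= exp_coefE Rpow_mult_distr; field.
apply: INR_fact_neq_0.
Qed.

Definition p_egf (x t : R) : R :=
  exp ((1 - x) * t) * (asin (sqrt x * exp ((1 - x) * t)) - asin (sqrt x)) /
  (sqrt x * sqrt (1 - x * exp (2 * (1 - x) * t))).

Lemma is_derive_asin u : -1 < u < 1 -> is_derive asin u (1 / sqrt (1 - u²)).
Proof.
move=> u1; apply/is_derive_Reals/(derive_pt_eq_1 _ _ _ (derivable_pt_asin u u1)).
exact: derive_pt_asin.
Qed.

Lemma is_derive_p_egf x t : 0 < x < 1 -> x * exp (2 * (1 - x) * t) < 1 ->
  is_derive (p_egf x) t
    ((1 - x) * (p_egf x t + exp (2 * (1 - x) * t)) / (1 - x * exp (2 * (1 - x) * t))).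
Proof.
move=> [x0 x1] xE.
have E_sq : exp (2 * (1 - x) * t) = exp ((1 - x) * t) * exp ((1 - x) * t).
  by rewrite -exp_plus; f_equal; ring.
have e0 := exp_pos ((1 - x) * t).
have r0 : 0 < sqrt x by apply: sqrt_lt_R0.
have r_sq : sqrt x * sqrt x = x by apply: sqrt_sqrt; lra.
have W0 : 0 < 1 - x * exp (2 * (1 - x) * t) by lra.
have w_sq := sqrt_sqrt _ (Rlt_le _ _ W0).
have u_sq : (sqrt x * exp ((1 - x) * t))² = x * exp (2 * (1 - x) * t).
  by rewrite /Rsqr E_sq -[X in _ = X * _]r_sq; ring.
have u1 : -1 < sqrt x * exp ((1 - x) * t) < 1.
  have : 0 < sqrt x * exp ((1 - x) * t) by apply: Rmult_lt_0_compat.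
  split; first lra.
  by apply: Rsqr_incrst_0; rewrite ?u_sq /Rsqr; lra.
have asin' := is_derive_asin _ u1.
rewrite /p_egf; auto_derive.
  repeat split; first by eexists; exact: asin'.
    by rewrite -Rminus_def; lra.
  by apply: Rgt_not_eq; apply: Rmult_lt_0_compat => //; apply: sqrt_lt_R0; lra.
rewrite (is_derive_unique _ _ _ asin') u_sq -!Rminus_def.
have w0 : 0 < sqrt (1 - x * exp (2 * (1 - x) * t)) by apply: sqrt_lt_R0.
move: (sqrt (1 - _)) w0 w_sq => w w0 w_sq; rewrite -w_sq E_sq; rewrite E_sq in w_sq.
move: (sqrt x) (exp ((1 - x) * t)) r0 e0 w_sq => r e r0 e0 w_sq.
have -> : x = (1 - w * w) / (e * e) by rewrite w_sq; field; lra.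
field; repeat split; lra.
Qed.

Lemma PS_derive_p_coef x n :
  PS_derive (p_coef x) n =
  x * PS_mult (exp_coef x) (PS_derive (p_coef x)) n + (1 - x) * (p_coef x n + exp_coef x n).
Proof.
rewrite /PS_derive /PS_mult sum_f_R0E big_mkord INRE !(RmultE, RplusE, RminusE).
rewrite p_coef_rec; congr (_ * _ + _).
by apply: eq_bigr => k _; rewrite INRE minusE.
Qed.

Lemma is_derive_PSeries_p_coef x t :
  0 < x < 1 -> Rabs t < / 4 -> x * exp (2 * (1 - x) * t) < 1 ->
  is_derive (PSeries (p_coef x)) t
    ((1 - x) * (PSeries (p_coef x) t + exp (2 * (1 - x) * t)) /
     (1 - x * exp (2 * (1 - x) * t))).
Proof.
move=> x01 t4 xE; have {}t4 : Rbar_lt (Rabs t) (/ 4) by [].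
have ra := Rbar_lt_le_trans _ _ _ t4 (CV_radius_p_coef x x01).
have re := Rbar_lt_le_trans _ _ _ t4 (CV_radius_exp_coef x x01).
have rd : Rbar_lt (Rabs t) (CV_radius (PS_derive (p_coef x))) by rewrite CV_radius_derive.
have Ha := PSeries_correct _ _ (CV_radius_inside _ _ ra).
have Hd := PSeries_correct _ _ (CV_radius_inside _ _ rd).
have He := is_pseries_exp_coef x t.
have ode : PSeries (PS_derive (p_coef x)) t =
    x * (exp (2 * (1 - x) * t) * PSeries (PS_derive (p_coef x)) t)
    + (1 - x) * (PSeries (p_coef x) t + exp (2 * (1 - x) * t)).
  apply: is_pseries_unique.
  have := is_series_plus _ _ _ _ (is_series_scal x _ _ (is_pseries_mult _ _ _ _ _ He Hd re rd))
            (is_series_scal (1 - x) _ _ (is_series_plus _ _ _ _ Ha He)).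
  apply: is_series_ext => n.
  by rewrite PS_derive_p_coef /scal /= /mult /= /plus /=; ring.
suff -> : (1 - x) * (PSeries (p_coef x) t + exp (2 * (1 - x) * t)) /
          (1 - x * exp (2 * (1 - x) * t)) = PSeries (PS_derive (p_coef x)) t.
  exact: is_derive_PSeries.
apply: (Rmult_eq_reg_r (1 - x * exp (2 * (1 - x) * t))); last lra.
rewrite /Rdiv Rmult_assoc Rinv_l; lra.
Qed.

Lemma linear_ode_eq0 (d a w : R -> R) (r : R) :
  (forall c, Rabs c < r -> is_derive d c (a c * d c)) ->
  (forall c, Rabs c < r -> is_derive w c (- 2 * a c * w c)) ->
  d 0 = 0 -> forall t, Rabs t < r -> w t <> 0 -> d t = 0.
Proof.
move=> hd hw d0 t tr wt.
have dK c : Rabs (c - 0) <= Rabs t -> is_derive (fun s => d s ^ 2 * w s) c 0.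
  rewrite Rminus_0_r => ct; have {ct} cr : Rabs c < r by lra.
  auto_derive; first by split; [eexists; exact: hd | split; [eexists; exact: hw|]].
  by rewrite (is_derive_unique _ _ _ (hd c cr)) (is_derive_unique _ _ _ (hw c cr)); ring.
have t0 : Rabs (t - 0) <= Rabs t by rewrite Rminus_0_r; exact: Rle_refl.
have [c [Kt _]] := MVT_cor4 _ (fun _ => 0) 0 (Rabs t) dK t t0.
rewrite d0 in Kt; apply: Rsqr_0_uniq; apply: (Rmult_eq_reg_r (w t)) => //.
rewrite /Rsqr; lra.
Qed.

Lemma x_exp_lt1 x c : 0 < x < 1 -> Rabs c < - ln x / 2 -> x * exp (2 * (1 - x) * c) < 1.
Proof.
move=> [x0 x1] cx.
have : 2 * (1 - x) * c < - ln x by move: (Rle_abs c) (Rabs_pos c); nra.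
move/exp_increasing; rewrite exp_Ropp exp_ln // => ltE.
apply: (Rlt_le_trans _ (x * / x)); first exact: Rmult_lt_compat_l.
by rewrite Rinv_r; lra.
Qed.

Lemma p_egf0 x : p_egf x 0 = 0.
Proof. by rewrite /p_egf Rmult_0_r exp_0 Rmult_1_r Rminus_diag Rmult_0_r Rdiv_0_l. Qed.

Lemma p_egf_eq_PSeries x t :
  0 < x < 1 -> Rabs t < Rmin (/ 4) (- ln x / 2) -> p_egf x t = PSeries (p_coef x) t.
Proof.
move=> x01 t_small.
pose E s := exp (2 * (1 - x) * s).
have small c : Rabs c < Rmin (/ 4) (- ln x / 2) -> Rabs c < / 4 /\ x * E c < 1.
  move=> cr; split; first exact: Rlt_le_trans cr (Rmin_l _ _).
  by apply: x_exp_lt1 => //; apply: Rlt_le_trans cr (Rmin_r _ _).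
apply: Rminus_diag_uniq.
(* [exp (-2(1-x)s) - x] is the square of an integrating factor of
   d' = (1 - x) / (1 - x E) d. *)
apply: (linear_ode_eq0 (fun s => p_egf x s - PSeries (p_coef x) s)
          (fun s => (1 - x) / (1 - x * E s)) (fun s => exp (- (2 * (1 - x)) * s) - x)
          (Rmin (/ 4) (- ln x / 2))) => //.
- move=> c /small [c4 cE].
  have := is_derive_minus _ _ _ _ _ (is_derive_p_egf x c x01 cE)
                                   (is_derive_PSeries_p_coef x c x01 c4 cE).
  move/(eq_ind _ (is_derive _ c)); apply.
  by change (minus ?a ?b = ?c) with (a - b = c :> R); rewrite /E in cE *; field; lra.
- move=> c /small [_ cE]; auto_derive => //.
  have eE : exp (- (2 * (1 - x)) * c) * E c = 1.
    by rewrite /E -exp_plus -exp_0; f_equal; ring.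
  have -> : exp (- (2 * (1 - x)) * c) - x = exp (- (2 * (1 - x)) * c) * (1 - x * E c).
    by nra.
  field; lra.
- by rewrite p_egf0 PSeries_0 p_coef0 Rminus_0_r.
- case/small: t_small => _ tE.
  have : 0 < exp (- (2 * (1 - x)) * t) * (1 - x * E t).
    by apply: Rmult_lt_0_compat; [exact: exp_pos | lra].
  have : exp (- (2 * (1 - x)) * t) * E t = 1 by rewrite /E -exp_plus -exp_0; f_equal; ring.
  nra.
Qed.

Lemma is_series_p_eval x t : 0 < x < 1 -> Rabs t < / 4 ->
  is_series (fun n => p_eval n x * t ^ n / INR (fact n)) (PSeries (p_coef x) t).
Proof.
move=> x01 t4; have {}t4 : Rbar_lt (Rabs t) (/ 4) by [].
have rt := Rbar_lt_le_trans _ _ _ t4 (CV_radius_p_coef x x01).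
apply: is_series_ext (PSeries_correct _ _ (CV_radius_inside _ _ rt)) => n.
rewrite pow_n_pow /scal /= /mult /= p_coefE; field; exact: INR_fact_neq_0.
Qed.

Theorem proposition3p3 (x : R) (hx0 : 0 < x) (hx1 : x < 1) :
  exists delta : R, 0 < delta /\
    forall t : R, Rabs t < delta ->
      is_series (fun n : nat => p_eval n x * t ^ n / INR (fact n))
        (exp ((1 - x) * t) *
           (asin (sqrt x * exp ((1 - x) * t)) - asin (sqrt x)) /
         (sqrt x * sqrt (1 - x * exp (2 * (1 - x) * t)))).
Proof.
have x01 : 0 < x < 1 by [].
have ln_x : ln x < 0 by rewrite -ln_1; apply: ln_increasing.
exists (Rmin (/ 4) (- ln x / 2)); split; first by apply: Rmin_pos; lra.
move=> t t_small; rewrite -/(p_egf x t) (p_egf_eq_PSeries x t x01 t_small).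
apply: is_series_p_eval => //; exact: Rlt_le_trans t_small (Rmin_l _ _).
Qed.
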